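(* Let $G$ be a graph with $\alpha(G)\geq d\geq 2$ and let $v$ be a vertex of $G$. Write $\mathrm{del}(v)=\{\tau\in\Delta_d^t(G): v\notin\tau\}$. (a) If $\alpha(G-v)\leq d-1$, then $\mathrm{del}(v)=\Delta_d^t(G)=\Delta^{N_G(v)}*\Delta_{d-1}^t(G-N_G[v])$. (b) If $\alpha(G-N_G[v])\leq d-2$, then $\mathrm{del}(v)=\Delta_d^t(G-v)$. (c) If $\alpha(G-v)\geq d$ and $\alpha(G-N_G[v])\geq d-1$, then $$\mathrm{del}(v)=\Delta_d^t(G-v)\cup\left(\Delta^{N_G(v)}*\Delta_{d-1}^t(G-N_G[v])\right).$$
   Context: All graphs are finite and simple; $\alpha(G)$ is the independence number, $G[S]$ the induced subgraph on $S$, $G-S=G[V(G)\setminus S]$, $N_G(v)$ the open and $N_G[v]=N_G(v)\cup\{v\}$ the closed neighborhood. For any integer $e\ge1$, $\Delta_e^t(H)=\{\sigma\subseteq V(H):\ \alpha(H[V(H)\setminus\sigma])\geq e\}$. $\Delta^X=\mathcal{P}(X)$ is the full simplex on $X$ (with $\Delta^\emptyset=\{\emptyset\}$), and for complexes on disjoint vertex sets the join is $K*J=\{\tau\cup\sigma:\tau\in K,\sigma\in J\}$. Complexes are compared as families of subsets of $V(G)$. *)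

(* A simple graph G is given by a finite vertex type T and an
   adjacency relation e : rel T, assumed symmetric and irreflexive.
   Induced subgraphs G[S] are represented by their vertex set S : {set T}. *)
From mathcomp Require Import all_boot.
Set Implicit Arguments. Unset Strict Implicit. Unset Printing Implicit Defensive.

Section Graph.
Variables (T : finType) (e : rel T).

Definition independent (I : {set T}) : bool :=
  [forall x in I, forall y in I, ~~ e x y].

Definition alpha_on (S : {set T}) : nat :=
  \max_(I : {set T} | (I \subset S) && independent I) #|I|.

Definition tcomplex (S : {set T}) (k : nat) : {set {set T}} :=
  [set sigma : {set T} | (sigma \subset S) && (k <= alpha_on (S :\: sigma))].

Definition nbhd (v : T) : {set T} := [set u | e v u].
Definition cnbhd (v : T) : {set T} := v |: nbhd v.

Definition fullsimplex (X : {set T}) : {set {set T}} := powerset X.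

Definition cjoin (K J : {set {set T}}) : {set {set T}} :=
  [set tau :|: sigma | tau in K, sigma in J].

Definition del_v (d : nat) (v : T) : {set {set T}} :=
  [set tau in tcomplex setT d | v \notin tau].

End Graph.

(* Split the independent sets of G - s (v outside s) according to whether they
   contain v: those avoiding v live in G - s - v, those containing v are v plus an
   independent set of G - s - N[v].  Hence
     alpha(G - s) = max(alpha(G - s - v), 1 + alpha(G - s - N[v])),
   and each of the three cases follows by comparing d with the two terms. The join
   with the full simplex on N(v) only records that faces may contain arbitrary
   neighbours of v, which are deleted anyway in G - N[v]. *)
From mathcomp Require Import all_boot.
Set Implicit Arguments. Unset Strict Implicit. Unset Printing Implicit Defensive.

Section IndependenceNumber.
Variables (T : finType) (e : rel T).
Hypotheses (e_sym : symmetric e) (e_irr : irreflexive e).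
Implicit Types (I J S s : {set T}) (v : T) (k : nat).

Lemma independentP I :
  reflect {in I &, forall x y, ~~ e x y} (independent e I).
Proof.
apply: (iffP forall_inP) => [indI x y xI yI | indI x xI].
  exact: forall_inP (indI x xI) y yI.
by apply/forall_inP => y; apply: indI.
Qed.

Lemma independentS I J : J \subset I -> independent e I -> independent e J.
Proof.
move=> /subsetP sJI /independentP indI; apply/independentP => x y /sJI xI /sJI.
exact: indI.
Qed.

Lemma independent0 : independent e set0.
Proof. by apply/independentP => x y; rewrite in_set0. Qed.

Lemma independentU1 v I :
  I \subset ~: cnbhd e v -> independent e I -> independent e (v |: I).
Proof.
move=> /subsetP IvN /independentP indI.
have vI x : x \in I -> ~~ e v x.
  by move=> /IvN; rewrite !inE negb_or => /andP[].
apply/independentP => x y; rewrite !in_setU1.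
case/predU1P=> [-> | xI]; case/predU1P=> [-> | yI].
- by rewrite e_irr.
- exact: vI.
- by rewrite e_sym vI.
- exact: indI.
Qed.

Lemma leq_card_alpha_on S I : I \subset S -> independent e I -> #|I| <= alpha_on e S.
Proof.
move=> IS indI; apply: (@leq_bigmax_cond _ (fun J => (J \subset S) && independent e J)).
by rewrite IS.
Qed.

Lemma alpha_on_witness S :
  exists I, [/\ I \subset S, independent e I & #|I| = alpha_on e S].
Proof.
rewrite /alpha_on; have [|I /andP[IS indI] ->] :=
  eq_bigmax_cond (fun J : {set T} => #|J|)
    (A := fun J : {set T} => (J \subset S) && independent e J).
  by apply/card_gt0P; exists set0; rewrite unfold_in /= sub0set independent0.
by exists I.
Qed.

Lemma alpha_onS S (S' : {set T}) : S \subset S' -> alpha_on e S <= alpha_on e S'.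
Proof.
move=> sSS'; have [I [IS indI <-]] := alpha_on_witness S.
by apply: leq_card_alpha_on indI; apply: subset_trans sSS'.
Qed.

Lemma alpha_on_split S v : v \in S ->
  alpha_on e S = maxn (alpha_on e (S :\ v)) (alpha_on e (S :\: cnbhd e v)).+1.
Proof.
move=> vS; apply/eqP; rewrite eqn_leq geq_max alpha_onS ?subsetDl //=.
apply/andP; split.
  have [I [IS indI <-]] := alpha_on_witness S; rewrite leq_max.
  have [vI | vI] := boolP (v \in I); last first.
    by rewrite leq_card_alpha_on // subsetD1 IS.
  apply/orP; right; rewrite (cardsD1 v I) vI ltnS.
  apply: leq_card_alpha_on (independentS (subsetDl _ _) indI).
  apply/subsetP => x; rewrite !inE => /andP[xv xI].
  rewrite (subsetP IS x xI) (negbTE xv) andbT.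
  by move/independentP: indI; apply.
have [I [IvN indI <-]] := alpha_on_witness (S :\: cnbhd e v).
have vI : v \notin I.
  by apply/negP => /(subsetP IvN); rewrite !inE eqxx.
have -> : #|I|.+1 = #|v |: I| by rewrite cardsU1 vI.
apply: leq_card_alpha_on.
  by rewrite subUset sub1set vS (subset_trans IvN (subsetDl _ _)).
by apply: independentU1 indI; apply: subset_trans IvN (subsetDr _ _).
Qed.

Lemma leq_alpha_on_compl k s v : v \notin s ->
  (k.+1 <= alpha_on e (~: s)) =
  (k.+1 <= alpha_on e (~: s :\ v)) || (k <= alpha_on e (~: s :\: cnbhd e v)).
Proof. by move=> vs; rewrite (@alpha_on_split _ v) ?inE // leq_max ltnS. Qed.

End IndependenceNumber.

Section Complexes.
Variables (T : finType) (e : rel T).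
Hypothesis e_irr : irreflexive e.
Implicit Types (s : {set T}) (v : T) (k : nat).

Lemma mem_tcomplexT k s : (s \in tcomplex e setT k) = (k <= alpha_on e (~: s)).
Proof. by rewrite inE subsetT setTD. Qed.

Lemma mem_del_v k v s :
  (s \in del_v e k v) = (v \notin s) && (k <= alpha_on e (~: s)).
Proof. by rewrite inE mem_tcomplexT andbC. Qed.

Lemma mem_tcomplexD1 k v s :
  (s \in tcomplex e (setT :\ v) k) = (v \notin s) && (k <= alpha_on e (~: s :\ v)).
Proof.
rewrite inE subsetD1 subsetT /=; congr (_ && (_ <= alpha_on e _)).
by apply/setP => x; rewrite !inE andbT andbC.
Qed.

Lemma mem_cjoin_nbhd k v s :
  (s \in cjoin (fullsimplex (nbhd e v)) (tcomplex e (~: cnbhd e v) k)) =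
  (v \notin s) && (k <= alpha_on e (~: s :\: cnbhd e v)).
Proof.
apply/imset2P/andP => [[t r] | [vs]].
  rewrite inE => tN; rewrite inE => /andP[rvN r_face] ->.
  have tvN : t \subset cnbhd e v by apply: subset_trans tN (subsetUr _ _).
  split.
    rewrite in_setU negb_or; apply/andP; split; apply/negP.
      by move=> /(subsetP tN); rewrite inE e_irr.
    by move=> /(subsetP rvN); rewrite !inE eqxx.
  congr (_ <= alpha_on e _): r_face; apply/setP => x; rewrite !inE.
  case xt: (x \in t); last by rewrite andbC.
  by have := subsetP tvN x xt; rewrite !inE => ->; rewrite andbF.
move=> s_face; exists (s :&: nbhd e v) (s :\: nbhd e v).
- by rewrite inE subsetIr.
- rewrite inE; apply/andP; split.
    apply/subsetP => x; rewrite !inE => /andP[xN xs]; rewrite negb_or xN andbT.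
    by apply: contraNneq vs => <-.
  congr (_ <= alpha_on e _): s_face; apply/setP => x; rewrite !inE.
  by case: (x \in s); case: (x == v); case: (e v x).
- by rewrite setID.
Qed.

End Complexes.

Theorem mainTheorem19 (T : finType) (e : rel T)
  (e_sym : symmetric e) (e_irr : irreflexive e) (d : nat) (v : T) :
  2 <= d -> d <= alpha_on e setT ->
  (* (a) *)
  (alpha_on e (setT :\ v) <= d.-1 ->
     del_v e d v = tcomplex e setT d /\
     tcomplex e setT d =
       cjoin (fullsimplex (nbhd e v)) (tcomplex e (~: cnbhd e v) d.-1)) /\
  (* (b) *)
  (alpha_on e (~: cnbhd e v) <= d - 2 ->
     del_v e d v = tcomplex e (setT :\ v) d) /\
  (* (c) *)
  (d <= alpha_on e (setT :\ v) -> d.-1 <= alpha_on e (~: cnbhd e v) ->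
     del_v e d v =
       tcomplex e (setT :\ v) d
       :|: cjoin (fullsimplex (nbhd e v)) (tcomplex e (~: cnbhd e v) d.-1)).
Proof.
case: d => [|k] // d_ge2 _ /=.
have split_face s := leq_alpha_on_compl e_sym e_irr k s (v := v).
have alpha_v s : alpha_on e (~: s :\ v) <= alpha_on e (setT :\ v).
  by apply: alpha_onS; apply: setSD; apply: subsetT.
have alpha_N s : alpha_on e (~: s :\: cnbhd e v) <= alpha_on e (~: cnbhd e v).
  by apply: alpha_onS; apply: subsetDr.
split; [move=> small_v | split; [move=> small_N | move=> _ _]].
- have v_notin s : s \in tcomplex e setT k.+1 -> v \notin s.
    rewrite mem_tcomplexT; apply: contraTN => vs; rewrite -ltnNge ltnS.
    apply: leq_trans small_v; apply: alpha_onS.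
    by rewrite -setTD; apply: setDS; rewrite sub1set.
  split; apply/setP => s.
    by rewrite mem_del_v -mem_tcomplexT andb_idl //; apply: v_notin.
  rewrite (mem_cjoin_nbhd e_irr); have [vs | vs] := boolP (v \in s).
    by apply: contraTF vs => /v_notin ->.
  by rewrite mem_tcomplexT split_face // ltnNge (leq_trans (alpha_v s) small_v).
- apply/setP => s; rewrite mem_del_v mem_tcomplexD1.
  have [// | vs] := boolP (v \in s); rewrite /= split_face //.
  have small_s : alpha_on e (~: s :\: cnbhd e v) < k.
    by apply: leq_ltn_trans (leq_trans (alpha_N s) small_N) _; rewrite subSS subn1 ltn_predL.
  by rewrite [k <= _]leqNgt small_s orbF.
- apply/setP => s; rewrite mem_del_v in_setU mem_tcomplexD1 (mem_cjoin_nbhd e_irr).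
  by have [// | vs] := boolP (v \in s); rewrite /= split_face.
Qed.
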